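(* Let $(a_n(q))$ be a $q$-Euler–Gauss sequence with $a_n(1)\neq0$ for all $n\ge1$. Then $(a_n(q))$ is a $q$-Gauss sequence.
   Context: $\mu$ is the Möbius function, $[n]_q=1+q+\dots+q^{n-1}$; polynomial congruences modulo $[n]_q$ mean divisibility of the difference by $[n]_q$ in $\mathbb{Z}[q]$. A sequence $(a_n(q))$ in $\mathbb{Z}[q]$ is a $q$-Euler–Gauss sequence if for all $n\ge1$, $\prod_{d\mid n,\,\mu(d)=1}a_{n/d}(q^d)\equiv\prod_{d\mid n,\,\mu(d)=-1}a_{n/d}(q^d)\pmod{[n]_q}$; it is a $q$-Gauss sequence if $\sum_{d\mid n}\mu(d)a_{n/d}(q^d)\equiv0\pmod{[n]_q}$ for all $n\ge1$. *)

From mathcomp Require Import all_boot all_order all_algebra.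
Set Implicit Arguments. Unset Strict Implicit. Unset Printing Implicit Defensive.
Import GRing.Theory.
Local Open Scope ring_scope.

(* Moebius function: mu(n) = (-1)^k if n>0 is a product of k distinct primes,
   0 if n is not squarefree (and 0 at n = 0, never used). *)
Definition mobius (n : nat) : int :=
  if (n == 0)%N then 0
  else if all (fun p => logn p n == 1)%N (primes n) then (-1) ^+ size (primes n)
  else 0.

Definition qint (n : nat) : {poly int} := \sum_(i < n) 'X^i.

Definition qcong (n : nat) (A B : {poly int}) : Prop :=
  exists r : {poly int}, A - B = r * qint n.

Definition qterm (a : nat -> {poly int}) (n d : nat) : {poly int} :=
  a (n %/ d)%N \Po 'X^d.

Definition q_Euler_Gauss (a : nat -> {poly int}) : Prop :=
  forall n : nat, (0 < n)%N ->
    qcong n (\prod_(d <- divisors n | mobius d == 1) qterm a n d)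
            (\prod_(d <- divisors n | mobius d == -1) qterm a n d).

Definition q_Gauss (a : nat -> {poly int}) : Prop :=
  forall n : nat, (0 < n)%N ->
    qcong n (\sum_(d <- divisors n) (mobius d)%:P * qterm a n d) 0.

(* Evaluate at a primitive M-th root of unity w with 1 < M dividing N.  For
   d | N, w^d is a primitive root of order M/gcd(d,M), so by strong induction
   on N every factor a_{N/d}(w^d) with d > 1 equals a_{N/lcm(d,M)}(1).
   Toggling a fixed prime p | M in a squarefree d flips mu(d) and fixes
   lcm(d,M); hence the two sides of the Euler-Gauss congruence at q = w share
   all factors except a_N(w) on one side and a_{N/M}(1) on the other.  These
   common factors are nonzero as a_n(1) <> 0, so a_N(w) = a_{N/M}(1) for every
   M.  Then the same toggling makes the Gauss sum vanish at every nontrivial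
   N-th root of unity, so it is divisible by the monic polynomial [N]_q, first
   over the algebraic numbers and then in Z[q]. *)

From mathcomp Require Import all_boot all_order all_algebra all_field.
Set Implicit Arguments. Unset Strict Implicit. Unset Printing Implicit Defensive.
Import GRing.Theory.
Local Open Scope ring_scope.

Lemma mobiusMp d p : prime p -> ~~ (p %| d)%N -> (0 < d)%N ->
  mobius (d * p) = - mobius d.
Proof.
move=> p_pr p_d d_gt0; have p_gt0 := prime_gt0 p_pr.
have dp_neq0 : (d * p != 0)%N by rewrite muln_eq0 negb_or -!lt0n d_gt0.
have primes_dp : perm_eq (primes (d * p)) (p :: primes d).
  apply: uniq_perm; first exact: primes_uniq.
    by rewrite /= primes_uniq andbT mem_primes (negbTE p_d) !andbF.
  by move=> q; rewrite primesM // in_cons orbC primes_prime // mem_seq1.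
have logp_d : logn p d = 0%N.
  by apply/eqP; rewrite -leqn0 leqNgt logn_gt0 mem_primes (negbTE p_d) !andbF.
have sqf_dp : all (fun q => logn q (d * p) == 1)%N (primes (d * p)) =
              all (fun q => logn q d == 1)%N (primes d).
  rewrite (perm_all _ primes_dp) /= lognM // logp_d (logn_prime _ p_pr) eqxx /=.
  apply: eq_in_all => q; rewrite mem_primes => /and3P [_ _ q_d].
  rewrite lognM // (logn_prime _ p_pr); case: (eqVneq q p) => [q_p | _].
    by rewrite q_p (negbTE p_d) in q_d.
  by rewrite addn0.
rewrite /mobius (negbTE dp_neq0) (gtn_eqF d_gt0) sqf_dp.
case: ifP => _; last by rewrite oppr0.
by rewrite (perm_size primes_dp) /= exprS mulN1r.
Qed.

Lemma mobius_neq0_dvd_div d p : prime p -> (p %| d)%N -> mobius d != 0 ->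
  ~~ (p %| d %/ p)%N.
Proof.
move=> p_pr p_d; rewrite /mobius; case: (posnP d) => [-> | d_gt0] //=.
case: ifP => [/allP sqf_d _ | _]; last by rewrite eqxx.
have /sqf_d/eqP logp_d : p \in primes d by rewrite mem_primes p_pr d_gt0.
apply/negP => p_dp.
have : (p ^ 2 %| d)%N.
  by rewrite expnS expn1 -(divnK p_d) mulnC dvdn_pmul2l ?prime_gt0.
by rewrite pfactor_dvdn // logp_d.
Qed.

Lemma mobius_sign d : mobius d != 0 -> (mobius d == 1) || (mobius d == -1).
Proof.
rewrite /mobius; case: ifP => // _; case: ifP => [_ _ | _]; last by rewrite eqxx.
by rewrite -signr_odd; case: odd.
Qed.

Lemma lcmnMp d p M : prime p -> ~~ (p %| d)%N -> (p %| M)%N ->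
  lcmn (d * p) M = lcmn d M.
Proof.
move=> p_pr p_d p_M.
have cop_dp : coprime d p by rewrite coprime_sym prime_coprime.
have lcm_dp : lcmn d p = (d * p)%N by rewrite -muln_lcm_gcd (eqP cop_dp) muln1.
by rewrite -lcm_dp -lcmnA (lcmn_idPr p_M).
Qed.

Lemma lcmn_divn d M : lcmn d M = (d * (M %/ gcdn d M))%N.
Proof. by rewrite muln_divA ?dvdn_gcdr. Qed.

Definition sqf_divisors n := [seq d <- divisors n | mobius d != 0].

Definition ptoggle p d := if (p %| d)%N then (d %/ p)%N else (d * p)%N.

Section Toggle.

Variables (n p : nat).
Hypotheses (n_gt0 : (0 < n)%N) (p_pr : prime p) (p_n : (p %| n)%N).

Lemma ptoggle_sqf_divisors d : d \in sqf_divisors n ->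
  [/\ ptoggle p d \in sqf_divisors n, ptoggle p (ptoggle p d) = d
    & mobius (ptoggle p d) = - mobius d].
Proof.
rewrite mem_filter -dvdn_divisors //.
move=> /andP [mu_d d_n]; have d_gt0 : (0 < d)%N by apply: dvdn_gt0 d_n.
rewrite /ptoggle; case: (boolP (p %| d)%N) => [p_d | p_d].
- have p_dp := mobius_neq0_dvd_div p_pr p_d mu_d.
  have d_eq : d = (d %/ p * p)%N by rewrite divnK.
  have dp_gt0 : (0 < d %/ p)%N by rewrite divn_gt0 ?prime_gt0 // dvdn_leq.
  have mu_dp : mobius (d %/ p) = - mobius d by rewrite {2}d_eq mobiusMp // opprK.
  rewrite (negbTE p_dp) -d_eq mu_dp; split=> //.
  rewrite mem_filter mu_dp oppr_eq0 mu_d -dvdn_divisors //.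
  by apply: dvdn_trans d_n; rewrite {2}d_eq dvdn_mulr.
- rewrite mulnK ?prime_gt0 // dvdn_mull // mobiusMp //; split=> //.
  rewrite mem_filter mobiusMp // oppr_eq0 mu_d -dvdn_divisors // Gauss_dvd ?d_n //.
  by rewrite coprime_sym prime_coprime.
Qed.

Lemma perm_ptoggle : perm_eq (sqf_divisors n) (map (ptoggle p) (sqf_divisors n)).
Proof.
have uniq_sqf : uniq (sqf_divisors n) by rewrite filter_uniq ?divisors_uniq.
apply: uniq_perm => //.
  rewrite map_inj_in_uniq // => x y x_sqf y_sqf t_xy.
  have [_ <- _] := ptoggle_sqf_divisors x_sqf.
  by have [_ <- _] := ptoggle_sqf_divisors y_sqf; rewrite t_xy.
move=> x; apply/idP/mapP => [x_sqf | [y y_sqf ->]].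
  by have [t_sqf tt_x _] := ptoggle_sqf_divisors x_sqf; exists (ptoggle p x).
by have [] := ptoggle_sqf_divisors y_sqf.
Qed.

Lemma lcmn_ptoggle M d : (p %| M)%N -> d \in sqf_divisors n ->
  lcmn (ptoggle p d) M = lcmn d M.
Proof.
move=> p_M d_sqf; rewrite /ptoggle; case: ifPn => [p_d | p_d]; last exact: lcmnMp.
move: d_sqf; rewrite mem_filter => /andP [mu_d _].
by rewrite -{2}(divnK p_d) lcmnMp // mobius_neq0_dvd_div.
Qed.

End Toggle.

Lemma big_mobius_lcmn (R : Type) (idx : R) (op : Monoid.com_law idx)
    n M (F : nat -> R) : (0 < n)%N -> (1 < M)%N -> (M %| n)%N ->
  \big[op/idx]_(d <- divisors n | mobius d == 1) F (lcmn d M) =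
  \big[op/idx]_(d <- divisors n | mobius d == -1) F (lcmn d M).
Proof.
move=> n_gt0 M_gt1 M_n; set p := pdiv M.
have p_pr : prime p := pdiv_prime M_gt1.
have p_M : (p %| M)%N := pdiv_dvd M.
have p_n : (p %| n)%N := dvdn_trans p_M M_n.
have to_sqf c G : c != 0 -> \big[op/idx]_(d <- divisors n | mobius d == c) G d =
                             \big[op/idx]_(d <- sqf_divisors n | mobius d == c) G d.
  move=> c_neq0; rewrite big_filter_cond; apply: eq_bigl => d.
  by case: eqVneq => [-> | _]; rewrite ?andbF ?c_neq0.
rewrite !to_sqf ?oppr_eq0 // [RHS](perm_big _ (perm_ptoggle n_gt0 p_pr p_n)) big_map.
rewrite big_seq_cond [RHS]big_seq_cond; apply: eq_big => [d | d /andP [d_sqf _]].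
  case: (boolP (d \in _)) => //= d_sqf.
  by have [_ _ ->] := ptoggle_sqf_divisors n_gt0 p_pr p_n d_sqf; rewrite eqr_opp.
by rewrite (lcmn_ptoggle p_pr p_M d_sqf).
Qed.

Lemma sum_mobius_split (V : zmodType) (r : seq nat) (x : nat -> V) :
  \sum_(d <- r) x d *~ mobius d =
  \sum_(d <- r | mobius d == 1) x d - \sum_(d <- r | mobius d == -1) x d.
Proof.
rewrite (bigID (fun d => mobius d == 1)) /=; congr (_ + _).
  by apply: eq_bigr => d /eqP ->.
rewrite (bigID (fun d => mobius d == -1)) /= [X in _ + X]big1 ?addr0.
  rewrite -sumrN; apply: eq_big => [d | d /andP [_ /eqP ->]]; last exact: mulrN1z.
  by case: eqP => // ->.
move=> d /andP [mu_n1 mu_nn1]; case: (eqVneq (mobius d) 0) => [-> | ]; first exact: mulr0z.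
by move/mobius_sign; rewrite (negbTE mu_n1) (negbTE mu_nn1).
Qed.

Lemma sum_mobius_lcmn (V : zmodType) n M (F : nat -> V) :
  (0 < n)%N -> (1 < M)%N -> (M %| n)%N ->
  \sum_(d <- divisors n) F (lcmn d M) *~ mobius d = 0.
Proof.
by move=> n_gt0 M_gt1 M_n; rewrite sum_mobius_split (big_mobius_lcmn _ F n_gt0) ?subrr.
Qed.

Definition evC (z : algC) : {rmorphism {poly int} -> algC} :=
  horner_morph (fun c : int => mulrC z c%:~R).

Lemma evC_polyC z c : evC z c%:P = c%:~R.
Proof. exact: horner_morphC. Qed.

Lemma evCE z p : evC z p = (map_poly intr p).[z].
Proof. by []. Qed.

Lemma evC_comp_Xn z p d : evC z (p \Po 'X^d) = evC (z ^+ d) p.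
Proof. by rewrite !evCE map_comp_poly horner_comp map_polyXn hornerXn. Qed.

Lemma evC1 p : evC 1 p = p.[1]%:~R.
Proof. by rewrite evCE -(rmorph1 intr) horner_map. Qed.

Lemma evC_qint z n : z ^+ n = 1 -> z != 1 -> evC z (qint n) = 0.
Proof.
move=> zn z_neq1; have := subrX1 z n; rewrite zn subrr => /esym/eqP.
rewrite mulf_eq0 subr_eq0 (negbTE z_neq1) /= => /eqP <-.
by rewrite rmorph_sum; apply: eq_bigr => i _; rewrite rmorphXn /= evCE map_polyX hornerX.
Qed.

Lemma dvdp_sumXn (K : fieldType) n (z : K) (G : {poly K}) :
  n.-primitive_root z -> (forall x, x ^+ n = 1 -> x != 1 -> root G x) ->
  \sum_(i < n) 'X^i %| G.
Proof.
move=> z_prim G_roots.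
have Xsub1_neq0 : 'X - 1 != 0 :> {poly K} by rewrite -polyC1 polyXsubC_eq0.
rewrite -(dvdp_mul2l _ _ Xsub1_neq0) -subrX1 -(factor_Xn_sub_1 z_prim).
rewrite -(big_map (fun i => z ^+ i) xpredT (fun x => 'X - x%:P)).
apply: uniq_roots_dvdp.
  apply/allP => _ /mapP [i _ ->]; rewrite /root hornerM hornerXsubC.
  have [-> | zi_neq1] := eqVneq (z ^+ i) 1; first by rewrite subrr mul0r.
  rewrite (eqP (G_roots _ _ zi_neq1)) ?mulr0 //.
  by rewrite -exprM mulnC exprM (prim_expr_order z_prim) expr1n.
rewrite uniq_rootsE map_inj_in_uniq ?iota_uniq // => i j.
rewrite !mem_index_iota => /andP [_ i_lt] /andP [_ j_lt] /eqP.
by rewrite (eq_prim_root_expr z_prim) !modn_small // => /eqP.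
Qed.

Lemma dvdp_map_monic (R K : idomainType) (f : {rmorphism R -> K}) (p q : {poly R}) :
  injective f -> q \is monic -> map_poly f q %| map_poly f p -> q %| p.
Proof.
move=> f_inj q_monic fq_fp; have q_neq0 := monic_neq0 q_monic.
have size_f := size_map_inj_poly f_inj (rmorph0 f).
have mod_eq : p %% q = p - p %/ q * q.
  by rewrite {2}(Pdiv.IdomainMonic.divp_eq q_monic p) addrAC subrr add0r.
have fq_fmod : map_poly f q %| map_poly f (p %% q).
  by rewrite mod_eq rmorphB rmorphM /= dvdp_sub // dvdp_mull.
apply: contraTT (ltn_modpN0 p q_neq0) => mod_neq0; rewrite -leqNgt -!size_f.
by apply: dvdp_leq fq_fmod; rewrite -size_poly_eq0 size_f size_poly_eq0.
Qed.

Lemma qint_monic n : (0 < n)%N -> qint n \is monic.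
Proof.
move=> n_gt0; have := monic_Xn_sub_1 int n_gt0.
by rewrite subrX1 monicMl // -polyC1 monicXsubC.
Qed.

Lemma map_qint (R : nzRingType) (f : {rmorphism int -> R}) n :
  map_poly f (qint n) = \sum_(i < n) 'X^i.
Proof. by rewrite rmorph_sum; apply: eq_bigr => i _; rewrite rmorphXn /= map_polyX. Qed.

Definition unity_root_values (a : nat -> {poly int}) N :=
  forall M w, M.-primitive_root w -> (M %| N)%N -> evC w (a N) = evC 1 (a (N %/ M)%N).

Lemma evC_qterm_lcmn a N M w d :
  M.-primitive_root w -> (M %| N)%N -> (d %| N)%N -> unity_root_values a (N %/ d) ->
  evC w (qterm a N d) = evC 1 (a (N %/ lcmn d M)%N).
Proof.
move=> w_prim M_N d_N values_d.
have lcm_N : (d * (M %/ gcdn d M) %| N)%N by rewrite -lcmn_divn dvdn_lcm d_N M_N.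
rewrite /qterm evC_comp_Xn (values_d _ _ (exp_prim_root w_prim d)).
  by rewrite lcmn_divn divnMA.
by rewrite dvdn_divRL // mulnC.
Qed.

Section EulerGaussStep.

Variable a : nat -> {poly int}.
Hypotheses (a_EG : q_Euler_Gauss a) (a1_neq0 : forall n, (0 < n)%N -> (a n).[1] != 0).
Variables (N M : nat) (w : algC).
Hypotheses (N_gt0 : (0 < N)%N) (M_gt1 : (1 < M)%N) (M_N : (M %| N)%N).
Hypothesis w_prim : M.-primitive_root w.
Hypothesis values_div : forall d, (d %| N)%N -> (1 < d)%N -> unity_root_values a (N %/ d).

Lemma unity_root_values_step : evC w (a N) = evC 1 (a (N %/ M)%N).
Proof.
pose G m := evC 1 (a (N %/ m)%N).
have qterm_G d : d \in divisors N -> d != 1%N -> evC w (qterm a N d) = G (lcmn d M).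
  rewrite -dvdn_divisors // => d_N d_neq1; apply: evC_qterm_lcmn => //.
  by apply: values_div; rewrite // ltn_neqAle eq_sym d_neq1 (dvdn_gt0 N_gt0 d_N).
have pull1 (F : nat -> algC) : \prod_(d <- divisors N | mobius d == 1) F d =
    F 1%N * \prod_(d <- divisors N | (mobius d == 1) && (d != 1%N)) F d.
  rewrite -big_filter (bigD1_seq 1%N) ?filter_uniq ?divisors_uniq //.
    by rewrite big_filter_cond.
  by rewrite mem_filter divisor1.
set P := \prod_(d <- divisors N | (mobius d == 1) && (d != 1%N)) G (lcmn d M).
have P_neq0 : P != 0.
  rewrite prodf_seq_neq0; apply/allP => d d_N; apply/implyP => _.
  have lcm_N : (lcmn d M %| N)%N by rewrite dvdn_lcm M_N andbT dvdn_divisors.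
  have lcm_gt0 : (0 < lcmn d M)%N := dvdn_gt0 N_gt0 lcm_N.
  by rewrite /G evC1 intr_eq0 a1_neq0 // divn_gt0 // dvdn_leq.
have [r EG_N] := a_EG N_gt0.
have w_neq1 : w != 1 by rewrite -(expr1 w) -(prim_order_dvd w_prim) dvdn1 gtn_eqF.
have wN : w ^+ N = 1 by apply/eqP; rewrite -(prim_order_dvd w_prim).
have := congr1 (evC w) EG_N.
rewrite rmorphB rmorphM (evC_qint wN w_neq1) mulr0.
move/eqP; rewrite subr_eq0 !rmorph_prod pull1 => /eqP.
have -> : \prod_(d <- divisors N | mobius d == -1) evC w (qterm a N d) = G M * P.
  rewrite big_seq_cond (eq_bigr (fun d => G (lcmn d M))) -?big_seq_cond.
    by rewrite -big_mobius_lcmn // pull1 lcm1n.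
  by move=> d /andP [d_N mu_d]; rewrite qterm_G //; apply: contraTneq mu_d => ->.
rewrite big_seq_cond (eq_bigr (fun d => G (lcmn d M))) -?big_seq_cond -/P.
  by move/(mulIf P_neq0); rewrite /qterm evC_comp_Xn expr1 divn1.
by move=> d /andP [d_N /andP [_ d_neq1]]; rewrite qterm_G.
Qed.

End EulerGaussStep.

Lemma q_Euler_Gauss_unity_root_values a :
  q_Euler_Gauss a -> (forall n, (0 < n)%N -> (a n).[1] != 0) ->
  forall N, (0 < N)%N -> unity_root_values a N.
Proof.
move=> a_EG a1_neq0; elim/ltn_ind => N IH N_gt0 M w w_prim M_N.
have [M_le1 | M_gt1] := leqP M 1.
  have M1 : M = 1%N by apply/eqP; rewrite eqn_leq M_le1 (prim_order_gt0 w_prim).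
  by move: w_prim; rewrite M1 => /prim_expr_order; rewrite expr1 divn1 => ->.
apply: unity_root_values_step => // d d_N d_gt1; apply: IH; first exact: ltn_Pdiv.
by rewrite divn_gt0 ?(ltnW d_gt1) // dvdn_leq.
Qed.

Lemma evC_mobius_sum_qterm a N z :
  (forall n, (0 < n)%N -> unity_root_values a n) ->
  (0 < N)%N -> z ^+ N = 1 -> z != 1 ->
  evC z (\sum_(d <- divisors N) (mobius d)%:P * qterm a N d) = 0.
Proof.
move=> values N_gt0 zN z_neq1; have [M z_prim M_N] := prim_order_exists N_gt0 zN.
have M_neq1 : M != 1%N by rewrite -dvdn1 (prim_order_dvd z_prim) expr1.
have M_gt1 : (1 < M)%N by rewrite ltn_neqAle eq_sym M_neq1 (prim_order_gt0 z_prim).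
rewrite rmorph_sum -[RHS](sum_mobius_lcmn (fun m => evC 1 (a (N %/ m)%N)) N_gt0 M_gt1 M_N).
apply: eq_big_seq => d; rewrite -dvdn_divisors // => d_N.
have d_gt0 : (0 < d)%N := dvdn_gt0 N_gt0 d_N.
rewrite rmorphM evC_polyC mulrzl (evC_qterm_lcmn z_prim M_N d_N) //.
by apply: values; rewrite divn_gt0 // dvdn_leq.
Qed.

Theorem theorem6 (a : nat -> {poly int}) :
  q_Euler_Gauss a ->
  (forall n : nat, (0 < n)%N -> (a n).[1] != 0) ->
  q_Gauss a.
Proof.
move=> a_EG a1_neq0 n n_gt0; have values := q_Euler_Gauss_unity_root_values a_EG a1_neq0.
have [z z_prim] := C_prim_root_exists n_gt0.
have : qint n %| \sum_(d <- divisors n) (mobius d)%:P * qterm a n d.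
  apply: (@dvdp_map_monic _ _ intr _ _ intr_inj (qint_monic n_gt0)).
  rewrite map_qint; apply: (dvdp_sumXn z_prim) => x xn x_neq1.
  by rewrite /root -evCE evC_mobius_sum_qterm.
by case/(Pdiv.IdomainMonic.dvdpP (qint_monic n_gt0)) => r ->; exists r; rewrite subr0.
Qed.
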